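(* Let $B=(B,+,0)$ be a unitary magma and $(X,\varphi)$ a $B$-action. Then $(X,\varphi(-,0,-,0),0)$, i.e. $X$ with operation $x+x'=\varphi(x,0,x',0)$ and neutral element $0$, is a unitary magma, and $$X\xrightarrow{\langle 1,0\rangle} X\rtimes_\varphi B \underset{\langle 0,1\rangle}{\overset{\pi_B}{\rightleftarrows}} B$$ is a split extension of unitary magmas: the maps $\langle1,0\rangle(x)=(x,0)$, $\pi_B(x,b)=b$ and $\langle 0,1\rangle(b)=(0,b)$ are well-defined morphisms of unitary magmas, $\pi_B\langle0,1\rangle=1_B$, and $\langle 1,0\rangle$ is a kernel of $\pi_B$. Moreover, for $(x,b)\in X\times B$, one has $(x,b)\in X\rtimes_\varphi B$ if and only if $(x,b)=(x,0)+(0,b)$, where the sum is given by $(x,b)+(x',b')=(\varphi(x,b,x',b'),b+b')$.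
   Context: A unitary magma is a set with a binary operation $+$ and an element $0$ with $b+0=b=0+b$ for all $b$; morphisms preserve $+$ and $0$. A $B$-action is a pair $(X,\varphi)$ with $X$ a set and $\varphi\colon X\times B\times X\times B\to X$ a map such that: (1) there is an element $0\in X$ with $\varphi(x,0,0,0)=x=\varphi(0,0,x,0)$ for all $x\in X$; (2) $\varphi(x,b,0,0)=\varphi(x,0,0,b)=\varphi(0,0,x,b)$ for all $x\in X,b\in B$; (3) $\varphi(0,b,0,b')=0$ for all $b,b'\in B$; (4) writing $\varphi_{00}(x,b)=\varphi(x,0,0,b)$, for all $x,x'\in X$, $b,b'\in B$: $\varphi(x,b,x',b')=\varphi_{00}\big(\varphi(\varphi_{00}(x,b),b,\varphi_{00}(x',b'),b'),\,b+b'\big)$. The semidirect product $X\rtimes_\varphi B$ is the set $\{(x,b)\in X\times B\mid\varphi(x,0,0,b)=x\}$ with operation $(x,b)+(x',b')=(\varphi(x,b,x',b'),b+b')$ and neutral element $(0,0)$ (it is a unitary magma). *)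

Set Implicit Arguments.

Definition unitary_magma (M : Type) (add : M -> M -> M) (z : M) : Prop :=
  forall m, add m z = m /\ add z m = m.

Definition umagma_morph (M N : Type) (addM : M -> M -> M) (zM : M)
  (addN : N -> N -> N) (zN : N) (f : M -> N) : Prop :=
  (forall a b, f (addM a b) = addN (f a) (f b)) /\ f zM = zN.

Definition is_action (B : Type) (addB : B -> B -> B) (zB : B)
  (X : Type) (phi : X -> B -> X -> B -> X) (zX : X) : Prop :=
  (forall x, phi x zB zX zB = x /\ phi zX zB x zB = x) /\
  (forall x b, phi x b zX zB = phi x zB zX b /\ phi x zB zX b = phi zX zB x b) /\
  (forall b b', phi zX b zX b' = zX) /\
  (forall x x' b b',
     phi x b x' b' =
     phi (phi (phi x zB zX b) b (phi x' zB zX b') b') zB zX (addB b b')).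

Definition sdp_mem (B X : Type) (zB : B) (zX : X)
  (phi : X -> B -> X -> B -> X) (p : X * B) : Prop :=
  phi (fst p) zB zX (snd p) = fst p.

Definition sdp_add (B X : Type) (addB : B -> B -> B)
  (phi : X -> B -> X -> B -> X) (p q : X * B) : X * B :=
  (phi (fst p) (snd p) (fst q) (snd q), addB (snd p) (snd q)).

Definition act_add (B X : Type) (zB : B) (phi : X -> B -> X -> B -> X)
  (x x' : X) : X := phi x zB x' zB.

(* The key consequence of the action axioms is that [phi(-,0,0,c)] is idempotent: axiom (4) with
   [x' = 0] and [b = 0] collapses to [phi00 (phi00 x c) c = phi00 x c].  Hence [phi(x,b,x',b')]
   always lands in the image of [phi00 - (b + b')], which gives the closure of [X ⋊ B] under [+],
   while axiom (2) makes [(0,0)] neutral on it.  The kernel of [pi_B] consists of the pairs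
   [(x,0)], on which the operation of [X ⋊ B] is that of [X], so every morphism into [X ⋊ B]
   with trivial second component factors uniquely through [<1,0>] by taking first components. *)


Set Implicit Arguments.

Section SemidirectProduct.

Variables (B : Type) (addB : B -> B -> B) (zB : B).
Variables (X : Type) (phi : X -> B -> X -> B -> X) (zX : X).

Local Notation phi00 x b := (phi x zB zX b).
Local Notation mem := (sdp_mem zB zX phi).
Local Notation sadd := (sdp_add addB phi).

Section Action.

Hypothesis HB : unitary_magma addB zB.
Hypothesis Hphi : is_action addB zB phi zX.

Lemma phi_x000 x : phi00 x zB = x.
Proof. apply Hphi. Qed.

Lemma phi_00x0 x : phi zX zB x zB = x.
Proof. apply Hphi. Qed.

Lemma phi_xb00 x b : phi x b zX zB = phi00 x b.
Proof. apply Hphi. Qed.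

Lemma phi_00xb x b : phi zX zB x b = phi00 x b.
Proof. symmetry; apply Hphi. Qed.

Lemma phi_0b0b b b' : phi zX b zX b' = zX.
Proof. apply Hphi. Qed.

Lemma phi_normal x b x' b' :
  phi x b x' b' = phi00 (phi (phi00 x b) b (phi00 x' b') b') (addB b b').
Proof. apply Hphi. Qed.

Lemma phi00_idem x c : phi00 (phi00 x c) c = phi00 x c.
Proof.
  pose proof (phi_normal x zB zX c) as E.
  rewrite phi_x000, phi_0b0b, (proj2 (HB c)) in E.
  now symmetry.
Qed.

Lemma act_add_unitary : unitary_magma (act_add zB phi) zX.
Proof. intro x; split; [apply phi_x000 | apply phi_00x0]. Qed.

Lemma sdp_mem_add p q : mem (sadd p q).
Proof.
  destruct p as [x b], q as [x' b']; unfold sdp_mem; simpl.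
  now rewrite (phi_normal x b x' b'), phi00_idem.
Qed.

Lemma sdp_mem_inl x : mem (x, zB).
Proof. apply phi_x000. Qed.

Lemma sdp_mem_inr b : mem (zX, b).
Proof. apply phi_0b0b. Qed.

Lemma sdp_add0r p : mem p -> sadd p (zX, zB) = p.
Proof.
  destruct p as [x b]; unfold sdp_mem, sdp_add; simpl; intro Hp.
  now rewrite phi_xb00, Hp, (proj1 (HB b)).
Qed.

Lemma sdp_add0l p : mem p -> sadd (zX, zB) p = p.
Proof.
  destruct p as [x b]; unfold sdp_mem, sdp_add; simpl; intro Hp.
  now rewrite phi_00xb, Hp, (proj2 (HB b)).
Qed.

Lemma sdp_add_inl x x' : (act_add zB phi x x', zB) = sadd (x, zB) (x', zB).
Proof. unfold sdp_add; simpl; now rewrite (proj1 (HB zB)). Qed.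

Lemma sdp_add_inr b b' : sadd (zX, b) (zX, b') = (zX, addB b b').
Proof. unfold sdp_add; simpl; now rewrite phi_0b0b. Qed.

Lemma sdp_mem_decomp x b : mem (x, b) <-> (x, b) = sadd (x, zB) (zX, b).
Proof.
  unfold sdp_mem, sdp_add; simpl; rewrite (proj2 (HB b)).
  split; [now intros -> | now intros [= <-]].
Qed.

End Action.

Lemma sdp_kernel_factor (Y : Type) (addY : Y -> Y -> Y) (zY : Y) (f : Y -> X * B) :
  (forall y y', f (addY y y') = sadd (f y) (f y')) ->
  f zY = (zX, zB) ->
  (forall y, snd (f y) = zB) ->
  exists g : Y -> X,
    (umagma_morph addY zY (act_add zB phi) zX g /\ forall y, (g y, zB) = f y) /\
    (forall g' : Y -> X,
       umagma_morph addY zY (act_add zB phi) zX g' ->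
       (forall y, (g' y, zB) = f y) -> forall y, g' y = g y).
Proof.
  intros f_add f_0 f_ker; exists (fun y => fst (f y)); split; [split; [split|] |].
  - intros y y'; rewrite f_add; unfold sdp_add, act_add; simpl.
    now rewrite (f_ker y), (f_ker y').
  - now rewrite f_0.
  - intro y; rewrite <- (f_ker y); now destruct (f y).
  - intros g' _ g'_f y; now rewrite <- (g'_f y).
Qed.

End SemidirectProduct.

Theorem proposition4p1
  (B : Type) (addB : B -> B -> B) (zB : B)
  (X : Type) (phi : X -> B -> X -> B -> X) (zX : X)
  (HB : unitary_magma addB zB)
  (Hphi : is_action addB zB phi zX) :
  (* X with x + x' = phi(x,0,x',0) and 0 is a unitary magma *)
  unitary_magma (act_add zB phi) zX /\
  (* the semidirect product is a well-defined unitary magma *)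
  (sdp_mem zB zX phi (zX, zB) /\
   (forall p q, sdp_mem zB zX phi p -> sdp_mem zB zX phi q ->
      sdp_mem zB zX phi (sdp_add addB phi p q)) /\
   (forall p, sdp_mem zB zX phi p ->
      sdp_add addB phi p (zX, zB) = p /\ sdp_add addB phi (zX, zB) p = p)) /\
  (* <1,0> : X -> X ⋊ B is a well-defined morphism *)
  ((forall x, sdp_mem zB zX phi (x, zB)) /\
   (forall x x', (act_add zB phi x x', zB) = sdp_add addB phi (x, zB) (x', zB))) /\
  (* pi_B : X ⋊ B -> B is a morphism *)
  ((forall p q, sdp_mem zB zX phi p -> sdp_mem zB zX phi q ->
      snd (sdp_add addB phi p q) = addB (snd p) (snd q)) /\
   snd (zX, zB) = zB) /\
  (* <0,1> : B -> X ⋊ B is a well-defined morphism *)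
  ((forall b, sdp_mem zB zX phi (zX, b)) /\
   (forall b b', sdp_add addB phi (zX, b) (zX, b') = (zX, addB b b'))) /\
  (* pi_B <0,1> = 1_B *)
  (forall b : B, snd (zX, b) = b) /\
  (* <1,0> is a kernel of pi_B (universal property in unitary magmas) *)
  (
   forall (Y : Type) (addY : Y -> Y -> Y) (zY : Y) (f : Y -> X * B),
     unitary_magma addY zY ->
     (forall y, sdp_mem zB zX phi (f y)) ->
     (forall y y', f (addY y y') = sdp_add addB phi (f y) (f y')) ->
     f zY = (zX, zB) ->
     (forall y, snd (f y) = zB) ->
     exists g : Y -> X,
       (umagma_morph addY zY (act_add zB phi) zX g /\
        forall y, (g y, zB) = f y) /\
       (forall g' : Y -> X,
          umagma_morph addY zY (act_add zB phi) zX g' ->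
          (forall y, (g' y, zB) = f y) -> forall y, g' y = g y)) /\
  (* membership characterization *)
  (forall x b, sdp_mem zB zX phi (x, b) <->
               (x, b) = sdp_add addB phi (x, zB) (zX, b)).
Proof.
  split; [exact (act_add_unitary Hphi) |].
  split.
  { split; [exact (sdp_mem_inl Hphi zX) |].
    split; [intros p q _ _; exact (sdp_mem_add HB Hphi p q) |].
    intros p Hp; split; [exact (sdp_add0r HB Hphi Hp) | exact (sdp_add0l HB Hphi Hp)]. }
  split; [split; [exact (sdp_mem_inl Hphi) | exact (sdp_add_inl phi HB)] |].
  split; [split; [reflexivity | reflexivity] |].
  split; [split; [exact (sdp_mem_inr Hphi) | exact (sdp_add_inr Hphi)] |].
  split; [reflexivity |].
  split; [intros Y addY zY f _ _; apply sdp_kernel_factor |].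
  exact (sdp_mem_decomp phi zX HB).
Qed.
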